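(* Let $f$ be a piecewise expanding unimodal map. Then there exists $\epsilon>0$ such that $f$ is $\epsilon$-expansive. If furthermore $f$ is good, then there exists $\epsilon>0$ such that $f$ is stably $\epsilon$-expansive.
   Context: Let $I=[-1,1]$ and $c=0$. $\mathcal B^1(I)$ is the Banach space of continuous $f:I\to\mathbb R$ that are $C^1$ on $[-1,0]$ and on $[0,1]$ with $f(1)=f(-1)$, normed by $|f|_1=\max\{|f|_{C^1[-1,0]},|f|_{C^1[0,1]}\}$ where $|f|_{C^1(Q)}=\max(\sup_Q|f|,\sup_Q|Df|)$. A piecewise expanding unimodal map is an $f\in\mathcal B^1(I)$ with $f(-1)=f(1)=-1$, $\inf_{x\in[-1,0]}Df(x)>1$, $\sup_{x\in[0,1]}Df(x)<-1$ and $f(0)\le1$. Such $f$ is good if either $c$ is not periodic, or $c$ has prime period $p\ge2$ and $|Df^{p-1}(f(c))|\min\{|Df^+(c)|,|Df^-(c)|\}>2$ ($Df^\pm(c)$ the one-sided derivatives at $c$). A map $f:I\to I$ is $\epsilon$-expansive if for every interval $L\subset I$ of positive length there is $i\ge1$ with $|f^i(L)|>\epsilon$. A piecewise expanding unimodal map $f_0$ is stably $\epsilon$-expansive if every piecewise expanding unimodal map $f$ sufficiently close to $f_0$ in $|\cdot|_1$ is $\epsilon$-expansive. *)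

From Stdlib Require Import Reals.
Open Scope R_scope.

Fixpoint iter (n : nat) (f : R -> R) (x : R) : R :=
  match n with
  | O => x
  | S m => f (iter m f x)
  end.

Definition cI (a b : R) : R -> Prop := fun x => a <= x <= b.

Definition I : R -> Prop := cI (-1) 1.

Definition deriv_within (D : R -> Prop) (g : R -> R) (x l : R) : Prop :=
  forall eps, 0 < eps -> exists delta, 0 < delta /\
    forall y, D y -> Rabs (y - x) < delta ->
      Rabs (g y - g x - l * (y - x)) <= eps * Rabs (y - x).

Definition cont_within (D : R -> Prop) (h : R -> R) (x : R) : Prop :=
  forall eps, 0 < eps -> exists delta, 0 < delta /\
    forall y, D y -> Rabs (y - x) < delta -> Rabs (h y - h x) < eps.

Definition C1_on (a b : R) (f Df : R -> R) : Prop :=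
  (forall x, cI a b x -> deriv_within (cI a b) f x (Df x)) /\
  (forall x, cI a b x -> cont_within (cI a b) Df x).

Definition in_B1 (f : R -> R) : Prop :=
  (exists DL DR, C1_on (-1) 0 f DL /\ C1_on 0 1 f DR) /\ f 1 = f (-1).

(* |f - g|_1 < delta, written out with the (unique) piecewise derivatives. *)
Definition B1_close (f g : R -> R) (delta : R) : Prop :=
  exists DLf DRf DLg DRg,
    C1_on (-1) 0 f DLf /\ C1_on 0 1 f DRf /\
    C1_on (-1) 0 g DLg /\ C1_on 0 1 g DRg /\
    (forall x, cI (-1) 0 x ->
       Rabs (f x - g x) < delta /\ Rabs (DLf x - DLg x) < delta) /\
    (forall x, cI 0 1 x ->
       Rabs (f x - g x) < delta /\ Rabs (DRf x - DRg x) < delta).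

(* Piecewise expanding unimodal map (turning point c = 0).
   inf_{[-1,0]} Df > 1  is written  exists lam > 1, Df >= lam on [-1,0];
   sup_{[0,1]} Df < -1  is written  exists lam > 1, Df <= -lam on [0,1]. *)
Definition PEU (f : R -> R) : Prop :=
  in_B1 f /\ f (-1) = -1 /\ f 1 = -1 /\
  (exists DL DR, C1_on (-1) 0 f DL /\ C1_on 0 1 f DR /\
     (exists lam, 1 < lam /\ forall x, cI (-1) 0 x -> lam <= DL x) /\
     (exists lam, 1 < lam /\ forall x, cI 0 1 x -> DR x <= - lam)) /\
  f 0 <= 1.

(* Goodness of a PEU map: c = 0 is not periodic, or it has prime period
   p >= 2 and |Df^{p-1}(f(c))| * min(|Df^+(c)|, |Df^-(c)|) > 2.
   Df^{p-1}(f c) is the derivative (relative to I) of the iterate f^{p-1}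
   at f(c); Df^-(c) = DL 0, Df^+(c) = DR 0. *)
Definition good (f : R -> R) : Prop :=
  (~ exists n : nat, (1 <= n)%nat /\ iter n f 0 = 0) \/
  (exists p : nat, (2 <= p)%nat /\ iter p f 0 = 0 /\
     (forall k : nat, (1 <= k)%nat -> (k < p)%nat -> iter k f 0 <> 0) /\
     exists DL DR l,
       C1_on (-1) 0 f DL /\ C1_on 0 1 f DR /\
       deriv_within I (iter (p - 1) f) (f 0) l /\
       Rabs l * Rmin (Rabs (DR 0)) (Rabs (DL 0)) > 2).

Definition is_interval (L : R -> Prop) : Prop :=
  forall x y z, L x -> L z -> x <= y <= z -> L y.

(* f is eps-expansive: for every interval L in I of positive length there is
   i >= 1 with |f^i(L)| > eps.  f^i(L) is an interval (f^i continuous), whose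
   length is its diameter, so |f^i(L)| > eps iff two points of L have images
   more than eps apart. *)
Definition expansive (eps : R) (f : R -> R) : Prop :=
  forall L : R -> Prop,
    (forall x, L x -> I x) -> is_interval L ->
    (exists x y, L x /\ L y /\ x < y) ->
    exists i : nat, (1 <= i)%nat /\
      exists x y, L x /\ L y /\ Rabs (iter i f x - iter i f y) > eps.

Definition stably_expansive (eps : R) (f0 : R -> R) : Prop :=
  exists delta, 0 < delta /\
    forall g, PEU g -> B1_close g f0 delta -> expansive eps g.

From Stdlib Require Import Reals Lra Lia Classical.
Open Scope R_scope.

(* If every iterate of an interval L had diameter at most eps, its images would grow by
   the expansion factor lam as long as they stay in one half of I, so some image
   straddles the turning point 0 and thus contains a segment [0, e] with |e| at least
   half its length.  The orbit of 0 returns to 0 or stays eps-far from it during P - 1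
   steps, so [0, e] is carried inside one half for P steps and comes back at least
   2 kap |e| long with kap > 1; cutting at 0 again gives [0, e'] with |e'| >= kap |e|,
   and iterating contradicts the bound eps.  For f itself 2 kap <= lam ^ P is pure
   expansion.  For PEU maps C^1-close to f, the gap of the orbit of 0 and the expansion
   persist when 0 is not periodic; when 0 has period p, goodness gives a return factor
   above 2 over one period, which is robust because the product of |Df| along the orbit
   of f 0 and the one-sided slopes at 0 depend continuously on the map. *)

Lemma is_lub_approx (E : R -> Prop) (s d : R) :
  is_lub E s -> 0 < d -> exists w, E w /\ s - d < w.
Proof.
  intros [Hub Hleast] Hd.
  apply NNPP; intro Hnone.
  assert (s <= s - d) by
    (apply Hleast; intros w Hw; apply Rnot_lt_le; intro; apply Hnone; exists w; auto).
  lra.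
Qed.

Lemma deriv_within_opp (D : R -> Prop) g x l :
  deriv_within D g x l -> deriv_within D (fun y => - g y) x (- l).
Proof.
  intros H e He. destruct (H e He) as [d [Hd Hdd]]. exists d; split; auto.
  intros y Hy Hyx.
  replace (- g y - - g x - - l * (y - x)) with (- (g y - g x - l * (y - x))) by ring.
  rewrite Rabs_Ropp; auto.
Qed.

Lemma deriv_within_restrict a b a' b' g x l :
  a <= a' -> b' <= b -> deriv_within (cI a b) g x l -> deriv_within (cI a' b') g x l.
Proof.
  intros Ha Hb H e He. destruct (H e He) as [d [Hd Hdd]]. exists d. split; auto.
  intros y Hy. apply Hdd. unfold cI in *; lra.
Qed.

Lemma deriv_within_cont (D : R -> Prop) g x l :
  deriv_within D g x l -> cont_within D g x.
Proof.
  intros H e He.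
  destruct (H 1 Rlt_0_1) as [d [Hd Hdd]].
  set (K := Rabs l + 1).
  assert (HK : 0 < K) by (unfold K; pose proof (Rabs_pos l); lra).
  exists (Rmin d (e / K)). split.
  { apply Rmin_glb_lt; auto. apply Rdiv_lt_0_compat; lra. }
  intros y Hy Hyx.
  pose proof (Rmin_l d (e / K)); pose proof (Rmin_r d (e / K)).
  specialize (Hdd y Hy ltac:(lra)).
  assert (Hlip : Rabs (g y - g x) <= K * Rabs (y - x)).
  { pose proof (Rabs_triang (g y - g x - l * (y - x)) (l * (y - x))) as Htri.
    replace (g y - g x - l * (y - x) + l * (y - x)) with (g y - g x) in Htri by ring.
    rewrite Rabs_mult in Htri. unfold K. lra. }
  assert (Hsmall : K * Rabs (y - x) < K * (e / K)) by (apply Rmult_lt_compat_l; lra).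
  replace (K * (e / K)) with e in Hsmall by (field; lra).
  lra.
Qed.

Lemma deriv_within_unique a b g x l1 l2 :
  a < b -> cI a b x ->
  deriv_within (cI a b) g x l1 -> deriv_within (cI a b) g x l2 -> l1 = l2.
Proof.
  intros Hab Hx H1 H2.
  apply NNPP; intro Hne.
  assert (Hp : 0 < Rabs (l1 - l2)) by (apply Rabs_pos_lt; lra).
  set (e := Rabs (l1 - l2) / 4).
  destruct (H1 e ltac:(unfold e; lra)) as [d1 [Hd1 Hdd1]].
  destruct (H2 e ltac:(unfold e; lra)) as [d2 [Hd2 Hdd2]].
  set (d := Rmin d1 d2).
  assert (Hd : 0 < d) by (apply Rmin_glb_lt; auto).
  assert (Hd1' : d <= d1) by apply Rmin_l.
  assert (Hd2' : d <= d2) by apply Rmin_r.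
  unfold cI in Hx.
  assert (Hy : exists y, cI a b y /\ y <> x /\ Rabs (y - x) < d).
  { destruct (Rlt_or_le x b) as [Hxb | Hxb].
    - exists (Rmin b (x + d / 2)).
      pose proof (Rmin_l b (x + d / 2)); pose proof (Rmin_r b (x + d / 2)).
      assert (x < Rmin b (x + d / 2)) by (apply Rmin_glb_lt; lra).
      split; [unfold cI; lra | split; [lra | rewrite Rabs_right; lra]].
    - exists (Rmax a (x - d / 2)).
      pose proof (Rmax_l a (x - d / 2)); pose proof (Rmax_r a (x - d / 2)).
      assert (Rmax a (x - d / 2) < x) by (apply Rmax_lub_lt; lra).
      split; [unfold cI; lra | split; [lra | rewrite Rabs_left; lra]]. }
  destruct Hy as [y [Hy [Hyx Hyd]]].
  specialize (Hdd1 y Hy ltac:(lra)). specialize (Hdd2 y Hy ltac:(lra)).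
  assert (Hyp : 0 < Rabs (y - x)) by (apply Rabs_pos_lt; lra).
  pose proof (Rabs_triang (g y - g x - l2 * (y - x)) (- (g y - g x - l1 * (y - x)))) as Htri.
  rewrite Rabs_Ropp in Htri.
  replace (g y - g x - l2 * (y - x) + - (g y - g x - l1 * (y - x)))
    with ((l1 - l2) * (y - x)) in Htri by ring.
  rewrite Rabs_mult in Htri.
  unfold e in *. nra.
Qed.

Lemma C1_on_unique a b G D1 D2 :
  a < b -> C1_on a b G D1 -> C1_on a b G D2 -> forall x, cI a b x -> D1 x = D2 x.
Proof.
  intros Hab [H1 _] [H2 _] x Hx. apply (deriv_within_unique a b G x); auto.
Qed.

(* Continuous induction: the supremum of the points of [x, y] up to which the bound
   holds with slope [m - e] cannot lie before [y], by differentiability there. *)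
Lemma deriv_lb_increment (a b : R) (g D : R -> R) (m : R) :
  (forall x, cI a b x -> deriv_within (cI a b) g x (D x)) ->
  (forall x, cI a b x -> m <= D x) ->
  forall x y, a <= x -> x <= y -> y <= b -> m * (y - x) <= g y - g x.
Proof.
  intros Hd Hm x y Hax Hxy Hyb.
  apply NNPP; intro Hn; apply Rnot_le_lt in Hn.
  assert (Hxy' : x < y) by (destruct Hxy as [H | H]; auto; subst; lra).
  set (e := (m * (y - x) - (g y - g x)) / (y - x) / 2).
  assert (He : 0 < e).
  { unfold e. apply Rmult_lt_0_compat; [apply Rdiv_lt_0_compat |]; lra. }
  set (phi := fun z => g z - g x - (m - e) * (z - x)).
  assert (Hphiy : phi y < 0).
  { unfold phi. assert (e * (y - x) = (m * (y - x) - (g y - g x)) / 2)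
      by (unfold e; field; lra).
    nra. }
  set (E := fun z => x <= z <= y /\ 0 <= phi z).
  destruct (completeness E) as [s Hs].
  { exists y. intros z [Hz _]. lra. }
  { exists x. split; [lra | unfold phi; lra]. }
  assert (Hxs : x <= s) by (apply (proj1 Hs); split; [lra | unfold phi; lra]).
  assert (Hsy : s <= y) by (apply (proj2 Hs); intros z [Hz _]; lra).
  assert (HIs : cI a b s) by (unfold cI; lra).
  destruct (Hd s HIs e He) as [d [Hd0 Hdd]].
  specialize (Hm s HIs).
  assert (Hps : 0 <= phi s).
  { destruct (is_lub_approx E s d Hs Hd0) as [w [[Hw1 Hw2] Hw3]].
    assert (Hws : w <= s) by (apply (proj1 Hs); split; auto).
    destruct (Req_dec w s) as [-> | Hne]; auto.
    specialize (Hdd w ltac:(unfold cI; lra) ltac:(split_Rabs; lra)).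
    unfold phi in *.
    assert (g s - g w >= D s * (s - w) - e * (s - w)) by (split_Rabs; nra).
    nra. }
  destruct (Rlt_or_le s y) as [Hlt | Hge]; [| assert (s = y) by lra; subst s; lra].
  set (s' := Rmin y (s + d / 2)).
  pose proof (Rmin_l y (s + d / 2)); pose proof (Rmin_r y (s + d / 2)).
  assert (Hss' : s < s') by (unfold s'; apply Rmin_glb_lt; lra).
  specialize (Hdd s' ltac:(unfold cI, s' in *; lra) ltac:(rewrite Rabs_right; unfold s' in *; lra)).
  rewrite (Rabs_right (s' - s)) in Hdd by lra.
  assert (E s') by (split; [unfold s' in *; lra | unfold phi in *; split_Rabs; nra]).
  assert (s' <= s) by (apply (proj1 Hs); auto).
  lra.
Qed.

Lemma deriv_ub_increment (a b : R) (g D : R -> R) (M : R) :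
  (forall x, cI a b x -> deriv_within (cI a b) g x (D x)) ->
  (forall x, cI a b x -> D x <= M) ->
  forall x y, a <= x -> x <= y -> y <= b -> g y - g x <= M * (y - x).
Proof.
  intros Hd HM x y Hax Hxy Hyb.
  assert (- M * (y - x) <= - g y - - g x).
  { apply (deriv_lb_increment a b (fun z => - g z) (fun z => - D z)); auto.
    - intros z Hz. apply deriv_within_opp. auto.
    - intros z Hz. specialize (HM z Hz). lra. }
  lra.
Qed.

Lemma abs_increment_bounds c d G DG a b D0 e :
  (forall x, cI c d x -> deriv_within (cI c d) G x (DG x)) ->
  c <= a -> a <= b -> b <= d -> 0 <= e ->
  (forall x, a <= x <= b -> Rabs (DG x - D0) <= e) ->
  (Rabs D0 - e) * (b - a) <= Rabs (G b - G a) <= (Rabs D0 + e) * (b - a).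
Proof.
  intros Hd Hca Hab Hbd He Hclose.
  assert (Hd' : forall x, cI a b x -> deriv_within (cI a b) G x (DG x)).
  { intros x Hx. apply (deriv_within_restrict c d); try lra.
    apply Hd. unfold cI in *; lra. }
  pose proof (deriv_lb_increment a b G DG (D0 - e) Hd'
    ltac:(intros x Hx; specialize (Hclose x Hx); split_Rabs; lra) a b) as Hlo.
  pose proof (deriv_ub_increment a b G DG (D0 + e) Hd'
    ltac:(intros x Hx; specialize (Hclose x Hx); split_Rabs; lra) a b) as Hup.
  specialize (Hlo ltac:(lra) ltac:(lra) ltac:(lra)).
  specialize (Hup ltac:(lra) ltac:(lra) ltac:(lra)).
  split_Rabs; nra.
Qed.

Lemma cont_within_ivt a b F :
  a <= b -> (forall x, cI a b x -> cont_within (cI a b) F x) ->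
  F a <= 0 -> 0 <= F b -> exists z, cI a b z /\ F z = 0.
Proof.
  intros Hab Hc Ha Hb.
  set (E := fun x => a <= x <= b /\ F x <= 0).
  destruct (completeness E) as [s Hs].
  { exists b. intros z [Hz _]. lra. }
  { exists a. split; auto. lra. }
  assert (Has : a <= s) by (apply (proj1 Hs); split; auto; lra).
  assert (Hsb : s <= b) by (apply (proj2 Hs); intros z [Hz _]; lra).
  assert (HIs : cI a b s) by (unfold cI; lra).
  exists s. split; auto.
  destruct (Rtotal_order (F s) 0) as [Hlt | [Heq | Hgt]]; auto; exfalso.
  - destruct (Hc s HIs (- F s) ltac:(lra)) as [d [Hd Hdd]].
    assert (Hsb' : s < b) by (destruct Hsb as [H | H]; auto; subst; lra).
    set (s' := Rmin b (s + d / 2)).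
    pose proof (Rmin_l b (s + d / 2)); pose proof (Rmin_r b (s + d / 2)).
    assert (s < s') by (apply Rmin_glb_lt; lra).
    specialize (Hdd s' ltac:(unfold cI, s' in *; lra)
      ltac:(rewrite Rabs_right; unfold s' in *; lra)).
    assert (E s') by (split; [unfold s' in *; lra | split_Rabs; lra]).
    assert (s' <= s) by (apply (proj1 Hs); auto).
    lra.
  - destruct (Hc s HIs (F s) ltac:(lra)) as [d [Hd Hdd]].
    destruct (is_lub_approx E s d Hs Hd) as [w [[Hw1 Hw2] Hw3]].
    assert (w <= s) by (apply (proj1 Hs); split; auto).
    specialize (Hdd w ltac:(unfold cI; lra) ltac:(split_Rabs; lra)).
    split_Rabs; lra.
Qed.

Lemma deriv_within_ivt a b G DG c d z :
  (forall x, cI a b x -> deriv_within (cI a b) G x (DG x)) ->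
  a <= c -> c <= d -> d <= b ->
  (G c <= z <= G d \/ G d <= z <= G c) -> exists x, c <= x <= d /\ G x = z.
Proof.
  intros Hd Hac Hcd Hdb Hz.
  assert (Hc : forall (sg : R), (sg = 1 \/ sg = -1) ->
            forall x, cI c d x -> cont_within (cI c d) (fun y => sg * (G y - z)) x).
  { intros sg Hsg x Hx e He.
    assert (HG : cont_within (cI c d) G x).
    { apply (deriv_within_cont _ _ _ (DG x)), (deriv_within_restrict a b); try lra.
      apply Hd. unfold cI in *; lra. }
    destruct (HG e He) as [r [Hr Hrr]]. exists r. split; auto.
    intros y Hy Hyx. specialize (Hrr y Hy Hyx).
    destruct Hsg; subst sg; split_Rabs; lra. }
  destruct Hz as [Hz | Hz].
  - destruct (cont_within_ivt c d (fun y => 1 * (G y - z)) Hcd (Hc 1 ltac:(lra)))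
      as [x [Hx1 Hx2]]; try lra.
    exists x. split; [exact Hx1 | lra].
  - destruct (cont_within_ivt c d (fun y => -1 * (G y - z)) Hcd (Hc (-1) ltac:(lra)))
      as [x [Hx1 Hx2]]; try lra.
    exists x. split; [exact Hx1 | lra].
Qed.

Lemma pow_unbounded lam d M : 1 < lam -> 0 < d -> exists n : nat, M < lam ^ n * d.
Proof.
  intros Hl Hd.
  destruct (Pow_x_infinity lam ltac:(rewrite Rabs_right; lra) (M / d + 1)) as [N HN].
  exists N. specialize (HN N (le_n N)).
  rewrite Rabs_right in HN by (apply Rle_ge, pow_le; lra).
  assert (M / d * d = M) by (field; lra).
  nra.
Qed.

Lemma finite_seq_gap (u : nat -> R) (P : nat) :
  exists eps, 0 < eps /\ forall j, (j < P)%nat -> u j = 0 \/ eps < Rabs (u j).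
Proof.
  induction P as [| P [eps [He H]]].
  - exists 1. split; [lra | intros; lia].
  - destruct (Req_dec (u P) 0) as [H0 | H0].
    + exists eps. split; auto. intros j Hj.
      destruct (Nat.eq_dec j P); [subst; auto | apply H; lia].
    + assert (0 < Rabs (u P)) by (apply Rabs_pos_lt; auto).
      pose proof (Rmin_l eps (Rabs (u P) / 2)); pose proof (Rmin_r eps (Rabs (u P) / 2)).
      exists (Rmin eps (Rabs (u P) / 2)). split; [apply Rmin_glb_lt; lra |].
      intros j Hj. destruct (Nat.eq_dec j P) as [-> | Hne]; [right; lra |].
      destruct (H j ltac:(lia)); auto. right. lra.
Qed.

Lemma product_tolerance a b e : 1 <= a -> 0 <= b -> 0 < e ->
  exists t, 0 < t /\ forall X Y Z, 0 <= Z ->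
    ((b - t) * Z <= Y -> (a - t) * Y <= X -> (a * b - e) * Z <= X) /\
    (Y <= (b + t) * Z -> X <= (a + t) * Y -> X <= (a * b + e) * Z).
Proof.
  intros Ha Hb He.
  set (t := Rmin 1 (e / (a + b + 1))).
  assert (Ht : 0 < t) by (apply Rmin_glb_lt; [lra | apply Rdiv_lt_0_compat; lra]).
  assert (Ht1 : t <= 1) by apply Rmin_l.
  assert (Hte : (a + b + 1) * t <= e).
  { assert (t <= e / (a + b + 1)) by apply Rmin_r.
    assert ((a + b + 1) * (e / (a + b + 1)) = e) by (field; lra).
    assert ((a + b + 1) * t <= (a + b + 1) * (e / (a + b + 1)))
      by (apply Rmult_le_compat_l; lra).
    lra. }
  exists t. split; auto. intros X Y Z HZ. split; intros HY HX.
  - assert ((a - t) * ((b - t) * Z) <= (a - t) * Y) by (apply Rmult_le_compat_l; lra).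
    assert ((a * b - e) * Z <= (a - t) * ((b - t) * Z)).
    { replace ((a - t) * ((b - t) * Z)) with ((a * b - (a + b) * t + t * t) * Z) by ring.
      apply Rmult_le_compat_r; nra. }
    lra.
  - assert ((a + t) * Y <= (a + t) * ((b + t) * Z)) by (apply Rmult_le_compat_l; lra).
    assert ((a + t) * ((b + t) * Z) <= (a * b + e) * Z).
    { replace ((a + t) * ((b + t) * Z)) with ((a * b + (a + b) * t + t * t) * Z) by ring.
      apply Rmult_le_compat_r; nra. }
    lra.
Qed.

Definition same_half (a b : R) : Prop := (a <= 0 /\ b <= 0) \/ (0 <= a /\ 0 <= b).

Definition expanding (g : R -> R) (lam : R) : Prop :=
  exists DL DR, C1_on (-1) 0 g DL /\ C1_on 0 1 g DR /\
    (forall x, cI (-1) 0 x -> lam <= DL x) /\ (forall x, cI 0 1 x -> DR x <= - lam).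

Lemma expanding_same_half g lam : expanding g lam -> 0 <= lam ->
  forall a b, I a -> I b -> same_half a b -> lam * Rabs (a - b) <= Rabs (g a - g b).
Proof.
  intros [DL [DR [[HL1 _] [[HR1 _] [HL HR]]]]] Hlam a b Ia Ib Hs.
  unfold I, cI in *.
  destruct Hs as [Hs | Hs]; destruct (Rle_dec a b).
  - pose proof (deriv_lb_increment _ _ g DL lam HL1 HL a b ltac:(lra) ltac:(lra) ltac:(lra)).
    split_Rabs; nra.
  - pose proof (deriv_lb_increment _ _ g DL lam HL1 HL b a ltac:(lra) ltac:(lra) ltac:(lra)).
    split_Rabs; nra.
  - pose proof (deriv_ub_increment _ _ g DR (-lam) HR1 HR a b ltac:(lra) ltac:(lra) ltac:(lra)).
    split_Rabs; nra.
  - pose proof (deriv_ub_increment _ _ g DR (-lam) HR1 HR b a ltac:(lra) ltac:(lra) ltac:(lra)).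
    split_Rabs; nra.
Qed.

Lemma expanding_maps_I g lam : expanding g lam -> 0 <= lam ->
  g (-1) = -1 -> g 1 = -1 -> g 0 <= 1 -> forall x, I x -> I (g x).
Proof.
  intros [DL [DR [[HL1 _] [[HR1 _] [HL HR]]]]] Hlam Hm1 H1 H0 x Ix.
  unfold I, cI in *.
  destruct (Rle_dec x 0).
  - pose proof (deriv_lb_increment _ _ g DL lam HL1 HL (-1) x ltac:(lra) ltac:(lra) ltac:(lra)).
    pose proof (deriv_lb_increment _ _ g DL lam HL1 HL x 0 ltac:(lra) ltac:(lra) ltac:(lra)).
    nra.
  - pose proof (deriv_ub_increment _ _ g DR (-lam) HR1 HR 0 x ltac:(lra) ltac:(lra) ltac:(lra)).
    pose proof (deriv_ub_increment _ _ g DR (-lam) HR1 HR x 1 ltac:(lra) ltac:(lra) ltac:(lra)).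
    nra.
Qed.

Lemma expanding_ivt g lam : expanding g lam ->
  forall a b z, I a -> I b -> same_half a b -> a <= b ->
    (g a <= z <= g b \/ g b <= z <= g a) -> exists x, a <= x <= b /\ g x = z.
Proof.
  intros [DL [DR [[HL1 _] [[HR1 _] _]]]] a b z Ia Ib Hs Hab Hz.
  unfold I, cI in *. destruct Hs.
  - apply (deriv_within_ivt (-1) 0 g DL); auto; lra.
  - apply (deriv_within_ivt 0 1 g DR); auto; lra.
Qed.

Lemma iter_maps_I (g : R -> R) :
  (forall x, I x -> I (g x)) -> forall n x, I x -> I (iter n g x).
Proof. intros H n; induction n; simpl; auto. Qed.

Lemma iter_succ_r (g : R -> R) n x : iter (S n) g x = iter n g (g x).
Proof. induction n; simpl in *; auto. rewrite <- IHn. auto. Qed.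

Lemma PEU_expanding f : PEU f -> exists lam, 1 < lam /\ expanding f lam.
Proof.
  intros [_ [_ [_ [[DL [DR [H1 [H2 [[l1 [Hl1 HL]] [l2 [Hl2 HR]]]]]]] _]]]].
  pose proof (Rmin_l l1 l2); pose proof (Rmin_r l1 l2).
  exists (Rmin l1 l2). split; [apply Rmin_glb_lt; auto |].
  exists DL, DR. repeat split; try apply H1; try apply H2.
  - intros x Hx. specialize (HL x Hx). lra.
  - intros x Hx. specialize (HR x Hx). lra.
Qed.

Lemma PEU_maps_I f : PEU f -> forall x, I x -> I (f x).
Proof.
  intros Hf. destruct (PEU_expanding f Hf) as [lam [Hlam He]].
  destruct Hf as [_ [Hm1 [H1 [_ H0]]]].
  apply (expanding_maps_I f lam); auto; lra.
Qed.

Definition critical_gap (g : R -> R) (eps : R) (P : nat) : Prop :=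
  forall j, (1 <= j)%nat -> (j < P)%nat -> iter j g 0 = 0 \/ eps < Rabs (iter j g 0).

Definition return_expanding (g : R -> R) (eps kap : R) (P : nat) : Prop :=
  forall e, I e -> 0 < Rabs e <= eps ->
    (forall j, (j < P)%nat -> same_half (iter j g 0) (iter j g e)) ->
    2 * kap * Rabs e <= Rabs (iter P g 0 - iter P g e).

Section ExpansivityCriterion.

Variables (g : R -> R) (lam eps kap : R) (P : nat).
Hypothesis g_maps_I : forall x, I x -> I (g x).
Hypothesis g_ivt : forall a b z, I a -> I b -> same_half a b -> a <= b ->
  (g a <= z <= g b \/ g b <= z <= g a) -> exists x, a <= x <= b /\ g x = z.
Hypothesis g_expands : forall a b, I a -> I b -> same_half a b ->
  lam * Rabs (a - b) <= Rabs (g a - g b).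
Hypothesis lam_gt1 : 1 < lam.
Hypothesis kap_gt1 : 1 < kap.
Hypothesis g_gap : critical_gap g eps P.
Hypothesis g_return : return_expanding g eps kap P.

Variable L : R -> Prop.
Hypothesis L_in_I : forall x, L x -> I x.
Hypothesis L_interval : is_interval L.
Hypothesis L_small : forall i, (1 <= i)%nat -> forall x y, L x -> L y ->
  Rabs (iter i g x - iter i g y) <= eps.

Definition covers (i : nat) (p q : R) : Prop :=
  forall z, Rmin p q <= z <= Rmax p q -> exists x, L x /\ iter i g x = z.

Definition straddles (p q : R) : Prop := p < 0 < q \/ q < 0 < p.

Lemma covers_ends i p q : covers i p q ->
  (exists x, L x /\ iter i g x = p) /\ (exists x, L x /\ iter i g x = q).
Proof. intros H; split; apply H; unfold Rmin, Rmax; destruct Rle_dec; lra. Qed.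

Lemma covers_in_I i p q : covers i p q -> I p /\ I q.
Proof.
  intros H. destruct (covers_ends i p q H) as [[x [Hx <-]] [y [Hy <-]]].
  split; apply iter_maps_I; auto.
Qed.

Lemma covers_small i p q : (1 <= i)%nat -> covers i p q -> Rabs (p - q) <= eps.
Proof.
  intros Hi H. destruct (covers_ends i p q H) as [[x [Hx <-]] [y [Hy <-]]].
  apply L_small; auto.
Qed.

Lemma covers_sym i p q : covers i p q -> covers i q p.
Proof. unfold covers. rewrite Rmin_comm, Rmax_comm. auto. Qed.

Lemma covers_sub i p q r : covers i p q -> Rmin p q <= r <= Rmax p q -> covers i p r.
Proof.
  intros H Hr z Hz. apply H. unfold Rmin, Rmax in *. repeat destruct Rle_dec; lra.
Qed.

Lemma covers_step i p q : covers i p q -> same_half p q -> covers (S i) (g p) (g q).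
Proof.
  intros H Hs z Hz.
  destruct (covers_in_I i p q H) as [Ip Iq].
  assert (Hx : exists x, Rmin p q <= x <= Rmax p q /\ g x = z).
  { unfold Rmin, Rmax in *. destruct (Rle_dec p q).
    - apply g_ivt; auto. destruct (Rle_dec (g p) (g q)); lra.
    - apply g_ivt; auto; [unfold same_half in *; lra | lra |].
      destruct (Rle_dec (g p) (g q)); lra. }
  destruct Hx as [x [Hx <-]].
  destruct (H x Hx) as [y [Hy Hyx]].
  exists y. split; auto. simpl. rewrite Hyx. auto.
Qed.

Lemma not_straddles_same_half p q : ~ straddles p q -> same_half p q.
Proof.
  unfold straddles, same_half. intros H.
  destruct (Rle_dec p 0); destruct (Rle_dec q 0);
    try (left; lra); try (right; lra); exfalso; apply H; lra.
Qed.

Lemma covers_grow_or_straddle n : forall i p q, (1 <= i)%nat -> covers i p q ->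
  (exists i' p' q', (1 <= i')%nat /\ covers i' p' q' /\ straddles p' q' /\
                    Rabs (p - q) <= Rabs (p' - q')) \/
  (exists p' q', covers (i + n) p' q' /\ lam ^ n * Rabs (p - q) <= Rabs (p' - q')).
Proof.
  induction n as [| n IHn]; intros i p q Hi H.
  - right. exists p, q. rewrite Nat.add_0_r. simpl. split; auto. lra.
  - destruct (classic (straddles p q)) as [Hs | Hs].
    + left. exists i, p, q. repeat split; auto. lra.
    + apply not_straddles_same_half in Hs.
      destruct (covers_in_I i p q H) as [Ip Iq].
      pose proof (g_expands p q Ip Iq Hs) as Hexp.
      pose proof (Rabs_pos (p - q)).
      destruct (IHn (S i) (g p) (g q) ltac:(lia) (covers_step i p q H Hs)) as
        [[i' [p' [q' [H1 [H2 [H3 H4]]]]]] | [p' [q' [H1 H2]]]].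
      * left. exists i', p', q'. repeat split; auto. nra.
      * right. exists p', q'. rewrite Nat.add_succ_r. split; auto.
        assert (0 <= lam ^ n) by (apply pow_le; lra).
        simpl. nra.
Qed.

Lemma covers_eventually_straddles i p q : (1 <= i)%nat -> covers i p q -> p <> q ->
  exists i' p' q', (1 <= i')%nat /\ covers i' p' q' /\ straddles p' q' /\
                   Rabs (p - q) <= Rabs (p' - q').
Proof.
  intros Hi H Hne.
  assert (Hpos : 0 < Rabs (p - q)) by (apply Rabs_pos_lt; lra).
  destruct (pow_unbounded lam (Rabs (p - q)) eps lam_gt1 Hpos) as [n Hn].
  destruct (covers_grow_or_straddle n i p q Hi H) as [Hl | [p' [q' [H1 H2]]]]; auto.
  pose proof (covers_small (i + n) p' q' ltac:(lia) H1). lra.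
Qed.

Lemma straddles_covers_zero i p q : covers i p q -> straddles p q ->
  exists e, covers i 0 e /\ e <> 0 /\ Rabs (p - q) / 2 <= Rabs e.
Proof.
  intros H Hs. unfold straddles in Hs.
  destruct (Rle_dec (Rabs p) (Rabs q)).
  - exists q. split; [| split; [lra | split_Rabs; lra]].
    apply covers_sym, (covers_sub i q p 0); [apply covers_sym; auto |].
    unfold Rmin, Rmax. destruct Rle_dec; lra.
  - exists p. split; [| split; [lra | split_Rabs; lra]].
    apply covers_sym, (covers_sub i p q 0); auto.
    unfold Rmin, Rmax. destruct Rle_dec; lra.
Qed.

Lemma covers_orbit_same_half i e : (1 <= i)%nat -> covers i 0 e ->
  forall j, (j <= P)%nat -> covers (i + j) (iter j g 0) (iter j g e) /\
    forall j', (j' < j)%nat -> same_half (iter j' g 0) (iter j' g e).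
Proof.
  intros Hi H. induction j as [| j IHj]; intros Hj.
  - rewrite Nat.add_0_r. split; [auto | intros; lia].
  - destruct (IHj ltac:(lia)) as [Hcov Hhalf].
    assert (Hs : same_half (iter j g 0) (iter j g e)).
    { destruct j as [| j].
      - simpl. unfold same_half. destruct (Rle_dec e 0); lra.
      - pose proof (covers_small (i + S j) _ _ ltac:(lia) Hcov).
        unfold same_half.
        destruct (g_gap (S j) ltac:(lia) ltac:(lia)) as [-> | Hfar].
        + destruct (Rle_dec (iter (S j) g e) 0); [left | right]; lra.
        + destruct (Rle_dec (iter (S j) g 0) 0); [left | right]; split_Rabs; lra. }
    split.
    + rewrite Nat.add_succ_r. apply (covers_step _ _ _ Hcov Hs).
    + intros j' Hj'. destruct (Nat.eq_dec j' j) as [-> | ]; auto. apply Hhalf; lia.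
Qed.

Lemma covers_zero_grows i e : (1 <= i)%nat -> covers i 0 e -> e <> 0 ->
  exists i' e', (1 <= i')%nat /\ covers i' 0 e' /\ e' <> 0 /\ kap * Rabs e <= Rabs e'.
Proof.
  intros Hi H Hne.
  assert (He : 0 < Rabs e) by (apply Rabs_pos_lt; auto).
  assert (Hsmall : Rabs e <= eps).
  { pose proof (covers_small i 0 e Hi H). rewrite Rabs_minus_sym, Rminus_0_r in H0. auto. }
  destruct (covers_orbit_same_half i e Hi H P (le_n P)) as [Hcov Hhalf].
  pose proof (g_return e (proj2 (covers_in_I i 0 e H)) (conj He Hsmall) Hhalf) as Hret.
  assert (Hne' : iter P g 0 <> iter P g e).
  { intro Heq. rewrite Heq, Rminus_diag, Rabs_R0 in Hret. nra. }
  destruct (covers_eventually_straddles (i + P) _ _ ltac:(lia) Hcov Hne')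
    as [i' [p' [q' [H1 [H2 [H3 H4]]]]]].
  destruct (straddles_covers_zero _ _ _ H2 H3) as [e' [E1 [E2 E3]]].
  exists i', e'. repeat split; auto. nra.
Qed.

Lemma covers_start x0 y0 : L x0 -> L y0 -> x0 < y0 -> exists p q, covers 1 p q /\ p <> q.
Proof.
  intros Hx Hy Hxy.
  assert (H0 : covers 0 x0 y0).
  { intros z Hz. exists z. split; auto.
    unfold Rmin, Rmax in Hz. destruct Rle_dec; try lra.
    apply (L_interval x0 z y0); auto. }
  assert (Hhalf : exists a, covers 0 a y0 /\ same_half a y0 /\ a < y0).
  { destruct (classic (straddles x0 y0)) as [Hs | Hs].
    - exists 0. unfold straddles, same_half in *. split; [| lra].
      apply covers_sym, (covers_sub 0 y0 x0 0); [apply covers_sym; auto |].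
      unfold Rmin, Rmax. destruct Rle_dec; lra.
    - exists x0. split; auto. split; auto. apply not_straddles_same_half; auto. }
  destruct Hhalf as [a [Ha [Hs Hay]]].
  destruct (covers_in_I _ _ _ Ha) as [Ia Iy].
  pose proof (g_expands a y0 Ia Iy Hs) as Hexp.
  exists (g a), (g y0). split; [apply covers_step; auto |].
  intro Heq. rewrite Heq, Rminus_diag, Rabs_R0, Rabs_left in Hexp by lra. nra.
Qed.

Lemma no_small_interval x0 y0 : L x0 -> L y0 -> x0 < y0 -> False.
Proof.
  intros Hx Hy Hxy.
  destruct (covers_start x0 y0 Hx Hy Hxy) as [p [q [Hpq Hne]]].
  destruct (covers_eventually_straddles 1 p q (le_n 1) Hpq Hne)
    as [i [p' [q' [Hi [H2 [H3 _]]]]]].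
  destruct (straddles_covers_zero _ _ _ H2 H3) as [e [E1 [E2 _]]].
  assert (Hep : 0 < Rabs e) by (apply Rabs_pos_lt; auto).
  assert (Hgrow : forall n, exists i e', (1 <= i)%nat /\ covers i 0 e' /\ e' <> 0 /\
                    kap ^ n * Rabs e <= Rabs e').
  { induction n as [| n [i' [e' [H1 [H2' [H3' H4]]]]]].
    - exists i, e. simpl. repeat split; auto. lra.
    - destruct (covers_zero_grows i' e' H1 H2' H3') as [i2 [e2 [K1 [K2 [K3 K4]]]]].
      exists i2, e2. repeat split; auto. simpl. nra. }
  destruct (pow_unbounded kap (Rabs e) eps kap_gt1 Hep) as [n Hn].
  destruct (Hgrow n) as [i' [e' [H1 [H2' [_ H4]]]]].
  pose proof (covers_small i' 0 e' H1 H2'). rewrite Rabs_minus_sym, Rminus_0_r in H. lra.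
Qed.

End ExpansivityCriterion.

Lemma expansive_criterion g lam eps kap P :
  (forall x, I x -> I (g x)) -> expanding g lam -> 1 < lam -> 1 < kap ->
  critical_gap g eps P -> return_expanding g eps kap P -> expansive eps g.
Proof.
  intros HI Hexp Hlam Hkap Hgap Hret L HL Hint [x [y [Hx [Hy Hxy]]]].
  apply NNPP; intro Hn.
  refine (no_small_interval g lam eps kap P HI (expanding_ivt g lam Hexp)
           (expanding_same_half g lam Hexp ltac:(lra)) Hlam Hkap Hgap Hret L HL Hint _
           x y Hx Hy Hxy).
  intros i Hi a b Ha Hb. apply Rnot_lt_le; intro Hlt. apply Hn.
  exists i. split; auto. exists a, b. repeat split; auto.
Qed.

Lemma return_expanding_of_pow g lam eps kap P :
  (forall x, I x -> I (g x)) -> expanding g lam -> 1 <= lam -> 2 * kap <= lam ^ P ->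
  return_expanding g eps kap P.
Proof.
  intros HI Hexp Hlam HP e Ie [He _] Hhalf.
  assert (I0 : I 0) by (unfold I, cI; lra).
  assert (Hgrow : forall j, (j <= P)%nat -> lam ^ j * Rabs e <= Rabs (iter j g 0 - iter j g e)).
  { induction j as [| j IHj]; intros Hj.
    - simpl. rewrite Rabs_minus_sym, Rminus_0_r. lra.
    - specialize (IHj ltac:(lia)).
      pose proof (expanding_same_half g lam Hexp ltac:(lra) _ _
        (iter_maps_I g HI j 0 I0) (iter_maps_I g HI j e Ie) (Hhalf j ltac:(lia))).
      assert (0 <= lam ^ j * Rabs e) by (apply Rmult_le_pos; [apply pow_le |]; lra).
      simpl. nra. }
  specialize (Hgrow P (le_n P)). nra.
Qed.

Lemma PEU_expansive f : PEU f -> exists eps, 0 < eps /\ expansive eps f.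
Proof.
  intros Hf. destruct (PEU_expanding f Hf) as [lam [Hlam Hexp]].
  destruct (pow_unbounded lam 1 4 Hlam Rlt_0_1) as [P HP].
  destruct (finite_seq_gap (fun j => iter j f 0) P) as [eps [Heps Hgap]].
  exists eps. split; auto.
  apply (expansive_criterion f lam eps 2 P); auto.
  - apply PEU_maps_I; auto.
  - lra.
  - intros j _ Hj. apply Hgap; auto.
  - apply (return_expanding_of_pow f lam); auto; [apply PEU_maps_I; auto | lra | lra].
Qed.

Lemma cont_within_glue G x :
  (x <= 0 -> cont_within (cI (-1) 0) G x) -> (0 <= x -> cont_within (cI 0 1) G x) ->
  I x -> cont_within I G x.
Proof.
  intros H1 H2 Hx e He. unfold I, cI in *.
  destruct (Rtotal_order x 0) as [Hlt | [-> | Hgt]].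
  - destruct (H1 ltac:(lra) e He) as [d [Hd Hdd]].
    exists (Rmin d (- x)). split; [apply Rmin_glb_lt; lra |].
    pose proof (Rmin_l d (- x)); pose proof (Rmin_r d (- x)).
    intros y Hy Hyx. apply Hdd; [split_Rabs | ]; lra.
  - destruct (H1 ltac:(lra) e He) as [d1 [Hd1 Hdd1]].
    destruct (H2 ltac:(lra) e He) as [d2 [Hd2 Hdd2]].
    exists (Rmin d1 d2). split; [apply Rmin_glb_lt; lra |].
    pose proof (Rmin_l d1 d2); pose proof (Rmin_r d1 d2).
    intros y Hy Hyx. destruct (Rle_dec y 0); [apply Hdd1 | apply Hdd2]; lra.
  - destruct (H2 ltac:(lra) e He) as [d [Hd Hdd]].
    exists (Rmin d x). split; [apply Rmin_glb_lt; lra |].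
    pose proof (Rmin_l d x); pose proof (Rmin_r d x).
    intros y Hy Hyx. apply Hdd; [split_Rabs | ]; lra.
Qed.

Section Stability.

Variables (f DL DR : R -> R) (lam : R).
Hypothesis f_PEU : PEU f.
Hypothesis f_DL : C1_on (-1) 0 f DL.
Hypothesis f_DR : C1_on 0 1 f DR.
Hypothesis DL_ge : forall x, cI (-1) 0 x -> lam <= DL x.
Hypothesis DR_le : forall x, cI 0 1 x -> DR x <= - lam.
Hypothesis lam_gt1 : 1 < lam.

Definition near (g : R -> R) (d : R) : Prop :=
  PEU g /\ exists DLg DRg, C1_on (-1) 0 g DLg /\ C1_on 0 1 g DRg /\
    (forall x, I x -> Rabs (g x - f x) < d) /\
    (forall x, cI (-1) 0 x -> Rabs (DLg x - DL x) < d) /\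
    (forall x, cI 0 1 x -> Rabs (DRg x - DR x) < d).

Lemma near_mono g d d' : near g d -> d <= d' -> near g d'.
Proof.
  intros [Hg [DLg [DRg [H1 [H2 [H3 [H4 H5]]]]]]] Hd. split; auto. exists DLg, DRg.
  refine (conj H1 (conj H2 (conj _ (conj _ _)))); intros x Hx;
    [specialize (H3 x Hx) | specialize (H4 x Hx) | specialize (H5 x Hx)]; lra.
Qed.

Lemma near_self d : 0 < d -> near f d.
Proof.
  intros Hd. split; auto. exists DL, DR.
  refine (conj f_DL (conj f_DR (conj _ (conj _ _)))); intros; rewrite Rminus_diag, Rabs_R0; auto.
Qed.

Lemma B1_close_near g d : PEU g -> B1_close g f d -> near g d.
Proof.
  intros Hg [DLg [DRg [DLf [DRf [Hg1 [Hg2 [Hf1 [Hf2 [Cl Cr]]]]]]]]].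
  split; auto. exists DLg, DRg. refine (conj Hg1 (conj Hg2 (conj _ (conj _ _)))).
  - intros x Hx. unfold I, cI in Hx. destruct (Rle_dec x 0).
    + apply (Cl x). unfold cI; lra.
    + apply (Cr x). unfold cI; lra.
  - intros x Hx. rewrite <- (C1_on_unique (-1) 0 f DLf DL ltac:(lra) Hf1 f_DL x Hx).
    apply (Cl x Hx).
  - intros x Hx. rewrite <- (C1_on_unique 0 1 f DRf DR ltac:(lra) Hf2 f_DR x Hx).
    apply (Cr x Hx).
Qed.

Lemma near_expanding g d : near g d -> d <= (lam - 1) / 2 -> expanding g ((1 + lam) / 2).
Proof.
  intros [_ [DLg [DRg [G1 [G2 [_ [G3 G4]]]]]]] Hd.
  exists DLg, DRg. refine (conj G1 (conj G2 (conj _ _))); intros x Hx.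
  - specialize (G3 x Hx). specialize (DL_ge x Hx). split_Rabs; lra.
  - specialize (G4 x Hx). specialize (DR_le x Hx). split_Rabs; lra.
Qed.

Lemma f_cont x : I x -> cont_within I f x.
Proof.
  intros Hx. apply cont_within_glue; auto; intros H.
  - apply (deriv_within_cont _ _ _ (DL x)), f_DL. unfold I, cI in *; lra.
  - apply (deriv_within_cont _ _ _ (DR x)), f_DR. unfold I, cI in *; lra.
Qed.

Lemma iter_near_cont k x0 : I x0 -> forall e, 0 < e ->
  exists r d, 0 < r /\ 0 < d /\ forall g u, near g d -> I u -> Rabs (u - x0) < r ->
    Rabs (iter k g u - iter k f x0) < e.
Proof.
  intros Hx0. induction k as [| k IHk]; intros e He.
  - exists e, 1. split; [auto | split; [lra |]]. intros. simpl. auto.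
  - assert (Iy : I (iter k f x0)) by (apply iter_maps_I; auto; apply PEU_maps_I; auto).
    destruct (f_cont _ Iy (e / 2) ltac:(lra)) as [eta [Heta Hc]].
    destruct (IHk eta Heta) as [r [d1 [Hr [Hd1 H1]]]].
    exists r, (Rmin d1 (e / 2)). split; [auto | split; [apply Rmin_glb_lt; lra |]].
    intros g u Hg Iu Hu. simpl.
    pose proof (Rmin_l d1 (e / 2)); pose proof (Rmin_r d1 (e / 2)).
    specialize (H1 g u (near_mono g _ d1 Hg ltac:(lra)) Iu Hu).
    assert (Iz : I (iter k g u)) by (apply iter_maps_I; auto; apply PEU_maps_I, Hg).
    specialize (Hc _ Iz H1).
    destruct (near_mono g _ (e / 2) Hg ltac:(lra)) as [_ [_ [_ [_ [_ [Hclose _]]]]]].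
    specialize (Hclose _ Iz).
    split_Rabs; lra.
Qed.

Lemma iter_near_uniform P e : 0 < e -> exists d, 0 < d /\
  forall g, near g d -> forall j, (j < P)%nat -> Rabs (iter j g 0 - iter j f 0) < e.
Proof.
  intros He. assert (I0 : I 0) by (unfold I, cI; lra).
  induction P as [| P [d1 [Hd1 H1]]].
  - exists 1. split; [lra | intros; lia].
  - destruct (iter_near_cont P 0 I0 e He) as [r [d2 [Hr [Hd2 H2]]]].
    exists (Rmin d1 d2). split; [apply Rmin_glb_lt; lra |].
    pose proof (Rmin_l d1 d2); pose proof (Rmin_r d1 d2).
    intros g Hg j Hj. destruct (Nat.eq_dec j P) as [-> | Hne].
    + apply H2; auto; [apply (near_mono g _ _ Hg); lra |].
      rewrite Rminus_diag, Rabs_R0; auto.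
    + apply H1; [apply (near_mono g _ _ Hg); lra | lia].
Qed.

Lemma near_critical_gap P : (forall j, (1 <= j)%nat -> (j < P)%nat -> iter j f 0 <> 0) ->
  exists eps d, 0 < eps /\ 0 < d /\ forall g, near g d -> critical_gap g eps P.
Proof.
  intros Hne.
  destruct (finite_seq_gap (fun j => iter j f 0) P) as [eps0 [Heps0 Hgap]].
  destruct (iter_near_uniform P (eps0 / 2) ltac:(lra)) as [d [Hd Hu]].
  exists (eps0 / 2), d. split; [lra | split; [auto |]].
  intros g Hg j Hj1 Hj2. right.
  destruct (Hgap j Hj2) as [Hz | Hfar]; [exfalso; apply (Hne j); auto |].
  specialize (Hu g Hg j Hj2). simpl in Hfar. split_Rabs; lra.
Qed.

Lemma near_pos g d : near g d -> 0 < d.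
Proof.
  intros [_ [_ [_ [_ [_ [H _]]]]]].
  specialize (H 0 ltac:(unfold I, cI; lra)). pose proof (Rabs_pos (g 0 - f 0)). lra.
Qed.

Lemma near_increment_left g d a b D0 e : near g d ->
  -1 <= a -> a <= b -> b <= 0 -> 0 <= e ->
  (forall x, a <= x <= b -> Rabs (DL x - D0) <= e) ->
  (Rabs D0 - (e + d)) * (b - a) <= Rabs (g b - g a) <= (Rabs D0 + (e + d)) * (b - a).
Proof.
  intros Hg Ha Hab Hb He Hclose. pose proof (near_pos g d Hg) as Hd.
  destruct Hg as [_ [DLg [_ [[HdLg _] [_ [_ [HLg _]]]]]]].
  apply (abs_increment_bounds (-1) 0 g DLg); auto; try lra.
  intros x Hx. specialize (Hclose x Hx). specialize (HLg x ltac:(unfold cI; lra)).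
  split_Rabs; lra.
Qed.

Lemma near_increment_right g d a b D0 e : near g d ->
  0 <= a -> a <= b -> b <= 1 -> 0 <= e ->
  (forall x, a <= x <= b -> Rabs (DR x - D0) <= e) ->
  (Rabs D0 - (e + d)) * (b - a) <= Rabs (g b - g a) <= (Rabs D0 + (e + d)) * (b - a).
Proof.
  intros Hg Ha Hab Hb He Hclose. pose proof (near_pos g d Hg) as Hd.
  destruct Hg as [_ [_ [DRg [_ [[HdRg _] [_ [_ HRg]]]]]]].
  apply (abs_increment_bounds 0 1 g DRg); auto; try lra.
  intros x Hx. specialize (Hclose x Hx). specialize (HRg x ltac:(unfold cI; lra)).
  split_Rabs; lra.
Qed.

Definition Df (x : R) : R := if Rle_dec x 0 then DL x else DR x.

Lemma Df_ge q : I q -> lam <= Rabs (Df q).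
Proof.
  intros Hq. unfold Df, I, cI in *. destruct Rle_dec.
  - specialize (DL_ge q ltac:(unfold cI; lra)). rewrite Rabs_right; lra.
  - specialize (DR_le q ltac:(unfold cI; lra)). rewrite Rabs_left; lra.
Qed.

Lemma near_increment_off_turning q : I q -> q <> 0 -> forall e, 0 < e ->
  exists r d, 0 < r /\ 0 < d /\ forall g u v, near g d -> I u -> I v ->
    Rabs (u - q) < r -> Rabs (v - q) < r ->
    (Rabs (Df q) - e) * Rabs (u - v) <= Rabs (g u - g v) <= (Rabs (Df q) + e) * Rabs (u - v).
Proof.
  intros Iq Hq e He. unfold I, cI in Iq.
  assert (Hord : exists r d, 0 < r /\ 0 < d /\ forall g a b, near g d -> I a -> I b ->
            a <= b -> Rabs (a - q) < r -> Rabs (b - q) < r ->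
            (Rabs (Df q) - e) * (b - a) <= Rabs (g b - g a) <= (Rabs (Df q) + e) * (b - a)).
  { replace e with (e / 2 + e / 2) by field.
    destruct (Rtotal_order q 0) as [Hlt | [Heq | Hgt]]; [| contradiction |].
    - destruct (proj2 f_DL q ltac:(unfold cI; lra) (e / 2) ltac:(lra)) as [r [Hr Hc]].
      pose proof (Rmin_l r (- q)); pose proof (Rmin_r r (- q)).
      exists (Rmin r (- q)), (e / 2). split; [apply Rmin_glb_lt; lra | split; [lra |]].
      intros g a b Hg Ia Ib Hab Ha Hb. unfold I, cI in Ia, Ib.
      replace (Df q) with (DL q) by (unfold Df; destruct Rle_dec; lra).
      apply (near_increment_left g); auto; try (split_Rabs; lra).
      intros x Hx. left. apply Hc; [unfold cI |]; split_Rabs; lra.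
    - destruct (proj2 f_DR q ltac:(unfold cI; lra) (e / 2) ltac:(lra)) as [r [Hr Hc]].
      pose proof (Rmin_l r q); pose proof (Rmin_r r q).
      exists (Rmin r q), (e / 2). split; [apply Rmin_glb_lt; lra | split; [lra |]].
      intros g a b Hg Ia Ib Hab Ha Hb. unfold I, cI in Ia, Ib.
      replace (Df q) with (DR q) by (unfold Df; destruct Rle_dec; lra).
      apply (near_increment_right g); auto; try (split_Rabs; lra).
      intros x Hx. left. apply Hc; [unfold cI |]; split_Rabs; lra. }
  destruct Hord as [r [d [Hr [Hd H]]]].
  exists r, d. split; [auto | split; [auto |]].
  intros g u v Hg Iu Iv Hu Hv. destruct (Rle_dec u v).
  - rewrite (Rabs_minus_sym u v), (Rabs_minus_sym (g u) (g v)), (Rabs_right (v - u)) by lra.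
    apply H; auto.
  - rewrite (Rabs_right (u - v)) by lra. apply H; auto. lra.
Qed.

Definition turning_slope : R := Rmin (Rabs (DR 0)) (Rabs (DL 0)).

Lemma near_increment_at_turning e : 0 < e -> exists r d, 0 < r /\ 0 < d /\
  forall g x, near g d -> I x -> Rabs x < r -> (turning_slope - e) * Rabs x <= Rabs (g 0 - g x).
Proof.
  intros He.
  destruct (proj2 f_DL 0 ltac:(unfold cI; lra) (e / 2) ltac:(lra)) as [r1 [Hr1 Hc1]].
  destruct (proj2 f_DR 0 ltac:(unfold cI; lra) (e / 2) ltac:(lra)) as [r2 [Hr2 Hc2]].
  pose proof (Rmin_l r1 r2); pose proof (Rmin_r r1 r2).
  pose proof (Rmin_l (Rabs (DR 0)) (Rabs (DL 0))); pose proof (Rmin_r (Rabs (DR 0)) (Rabs (DL 0))).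
  exists (Rmin r1 r2), (e / 2). split; [apply Rmin_glb_lt; lra | split; [lra |]].
  intros g x Hg Ix Hx. unfold I, cI, turning_slope in *.
  replace e with (e / 2 + e / 2) by field.
  destruct (Rle_dec 0 x).
  - destruct (near_increment_right g (e / 2) 0 x (DR 0) (e / 2)) as [Hlo _]; auto; try lra.
    { intros y Hy. left. apply Hc2; [unfold cI |]; split_Rabs; lra. }
    rewrite Rabs_minus_sym, (Rabs_right x) by lra. nra.
  - destruct (near_increment_left g (e / 2) x 0 (DL 0) (e / 2)) as [Hlo _]; auto; try lra.
    { intros y Hy. left. apply Hc1; [unfold cI |]; split_Rabs; lra. }
    rewrite (Rabs_left x) by lra. nra.
Qed.

(* [orbit_deriv k] is [|D(f^k)(f 0)|] as long as the orbit of [f 0] avoids the turning point. *)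
Fixpoint orbit_deriv (k : nat) : R :=
  match k with
  | O => 1
  | S m => orbit_deriv m * Rabs (Df (iter m f (f 0)))
  end.

Lemma f_zero_in_I : I (f 0).
Proof. apply PEU_maps_I; auto. unfold I, cI; lra. Qed.

Lemma orbit_deriv_ge1 k : 1 <= orbit_deriv k.
Proof.
  induction k as [| k IHk]; simpl; [lra |].
  pose proof (Df_ge _ (iter_maps_I f (PEU_maps_I f f_PEU) k _ f_zero_in_I)). nra.
Qed.

Lemma near_orbit_increment k : (forall j, (j < k)%nat -> iter j f (f 0) <> 0) ->
  forall e, 0 < e -> exists r d, 0 < r /\ 0 < d /\
  forall g u v, near g d -> I u -> I v -> Rabs (u - f 0) < r -> Rabs (v - f 0) < r ->
    (orbit_deriv k - e) * Rabs (u - v) <= Rabs (iter k g u - iter k g v) <=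
    (orbit_deriv k + e) * Rabs (u - v).
Proof.
  induction k as [| k IHk]; intros Hne e He.
  - exists 1, 1. split; [lra | split; [lra |]]. intros. simpl.
    pose proof (Rabs_pos (u - v)). nra.
  - set (q := iter k f (f 0)).
    assert (Iq : I q) by apply (iter_maps_I f (PEU_maps_I f f_PEU) k _ f_zero_in_I).
    destruct (product_tolerance (Rabs (Df q)) (orbit_deriv k) e) as [t [Ht Hprod]];
      [pose proof (Df_ge q Iq); lra | pose proof (orbit_deriv_ge1 k); lra | auto |].
    destruct (near_increment_off_turning q Iq (Hne k ltac:(lia)) t Ht)
      as [r1 [d1 [Hr1 [Hd1 Hstep]]]].
    destruct (iter_near_cont k (f 0) f_zero_in_I r1 Hr1) as [r' [d' [Hr' [Hd' Hcont]]]].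
    destruct (IHk ltac:(intros; apply Hne; lia) t Ht) as [r2 [d2 [Hr2 [Hd2 Hind]]]].
    exists (Rmin r' r2), (Rmin d1 (Rmin d' d2)).
    split; [apply Rmin_glb_lt; lra | split; [repeat apply Rmin_glb_lt; lra |]].
    intros g u v Hg Iu Iv Hu Hv.
    pose proof (Rmin_l r' r2); pose proof (Rmin_r r' r2).
    pose proof (Rmin_l d1 (Rmin d' d2)); pose proof (Rmin_r d1 (Rmin d' d2)).
    pose proof (Rmin_l d' d2); pose proof (Rmin_r d' d2).
    assert (IgI : forall x, I x -> I (g x)) by apply PEU_maps_I, Hg.
    assert (Hg1 : near g d1) by (apply (near_mono g _ _ Hg); lra).
    assert (Hg' : near g d') by (apply (near_mono g _ _ Hg); lra).
    assert (Hg2 : near g d2) by (apply (near_mono g _ _ Hg); lra).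
    destruct (Hind g u v Hg2 Iu Iv ltac:(lra) ltac:(lra)) as [Ylo Yup].
    destruct (Hstep g (iter k g u) (iter k g v) Hg1
      (iter_maps_I g IgI k u Iu) (iter_maps_I g IgI k v Iv)
      (Hcont g u Hg' Iu ltac:(lra)) (Hcont g v Hg' Iv ltac:(lra))) as [Xlo Xup].
    simpl. fold q. rewrite (Rmult_comm (orbit_deriv k)).
    destruct (Hprod (Rabs (g (iter k g u) - g (iter k g v))) (Rabs (iter k g u - iter k g v))
      (Rabs (u - v)) (Rabs_pos _)) as [Plo Pup].
    split; [apply Plo | apply Pup]; auto.
Qed.

Lemma f_zero_pos : 0 < f 0.
Proof.
  destruct f_PEU as [_ [Hm1 _]].
  pose proof (deriv_lb_increment (-1) 0 f DL lam (proj1 f_DL) DL_ge (-1) 0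
    ltac:(lra) ltac:(lra) ltac:(lra)).
  lra.
Qed.

Lemma deriv_iter_le_orbit_deriv k l : (forall j, (j < k)%nat -> iter j f (f 0) <> 0) ->
  deriv_within I (iter k f) (f 0) l -> Rabs l <= orbit_deriv k.
Proof.
  intros Hne Hd. apply Rnot_lt_le. intro Hlt.
  set (e := (Rabs l - orbit_deriv k) / 4).
  assert (He : 0 < e) by (unfold e; lra).
  destruct (near_orbit_increment k Hne e He) as [r [d [Hr [Hd0 Hb]]]].
  destruct (Hd e He) as [d2 [Hd2 Hdd]].
  set (t := Rmin (Rmin r d2) 1 / 2).
  assert (Ht : 0 < t /\ t < r /\ t < d2 /\ t <= 1 / 2).
  { unfold t. pose proof (Rmin_l (Rmin r d2) 1); pose proof (Rmin_r (Rmin r d2) 1).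
    pose proof (Rmin_l r d2); pose proof (Rmin_r r d2).
    assert (0 < Rmin (Rmin r d2) 1) by (repeat apply Rmin_glb_lt; lra). lra. }
  pose proof f_zero_in_I as I0. pose proof f_zero_pos.
  assert (Iy : I (f 0 - t)) by (unfold I, cI in *; lra).
  assert (Hyt : Rabs (f 0 - t - f 0) = t) by (rewrite Rabs_left; lra).
  specialize (Hdd (f 0 - t) Iy ltac:(lra)). rewrite Hyt in Hdd.
  destruct (Hb f (f 0 - t) (f 0) (near_self d Hd0) Iy I0 ltac:(lra)
    ltac:(rewrite Rminus_diag, Rabs_R0; lra)) as [_ Hup].
  rewrite Hyt in Hup.
  assert (Hlin : Rabs (l * (f 0 - t - f 0)) = Rabs l * t) by (rewrite Rabs_mult, Hyt; auto).
  pose proof (Rabs_triang (iter k f (f 0 - t) - iter k f (f 0) - l * (f 0 - t - f 0))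
              (- (iter k f (f 0 - t) - iter k f (f 0)))) as Htri.
  rewrite Rabs_Ropp in Htri.
  replace (iter k f (f 0 - t) - iter k f (f 0) - l * (f 0 - t - f 0) +
      - (iter k f (f 0 - t) - iter k f (f 0))) with (- (l * (f 0 - t - f 0))) in Htri by ring.
  rewrite Rabs_Ropp, Hlin in Htri.
  unfold e in *. nra.
Qed.

Lemma near_return_estimate k e : (forall j, (j < k)%nat -> iter j f (f 0) <> 0) -> 0 < e ->
  exists r d, 0 < r /\ 0 < d /\ forall g x, near g d -> I x -> Rabs x < r ->
    (orbit_deriv k * turning_slope - e) * Rabs x <= Rabs (iter (S k) g 0 - iter (S k) g x).
Proof.
  intros Hne He.
  assert (I0 : I 0) by (unfold I, cI; lra).
  destruct (product_tolerance (orbit_deriv k) turning_slope e) as [t [Ht Hprod]];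
    [apply orbit_deriv_ge1 | unfold turning_slope; apply Rmin_glb; apply Rabs_pos | auto |].
  destruct (near_orbit_increment k Hne t Ht) as [r1 [d1 [Hr1 [Hd1 Horbit]]]].
  destruct (near_increment_at_turning t Ht) as [r0 [d0 [Hr0 [Hd0 Hturn]]]].
  destruct (iter_near_cont 1 0 I0 r1 Hr1) as [r' [d' [Hr' [Hd' Hcont]]]].
  exists (Rmin r0 r'), (Rmin d1 (Rmin d0 d')).
  split; [apply Rmin_glb_lt; lra | split; [repeat apply Rmin_glb_lt; lra |]].
  intros g x Hg Ix Hx.
  pose proof (Rmin_l r0 r'); pose proof (Rmin_r r0 r').
  pose proof (Rmin_l d1 (Rmin d0 d')); pose proof (Rmin_r d1 (Rmin d0 d')).
  pose proof (Rmin_l d0 d'); pose proof (Rmin_r d0 d').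
  assert (Hg1 : near g d1) by (apply (near_mono g _ _ Hg); lra).
  assert (Hg0 : near g d0) by (apply (near_mono g _ _ Hg); lra).
  assert (Hg' : near g d') by (apply (near_mono g _ _ Hg); lra).
  assert (IgI : forall y, I y -> I (g y)) by apply PEU_maps_I, Hg.
  pose proof (Hturn g x Hg0 Ix ltac:(lra)) as Hfirst.
  pose proof (Hcont g 0 Hg' I0 ltac:(rewrite Rminus_diag, Rabs_R0; lra)) as Hg0f.
  pose proof (Hcont g x Hg' Ix ltac:(rewrite Rminus_0_r; lra)) as Hgxf.
  simpl in Hg0f, Hgxf.
  destruct (Horbit g (g 0) (g x) Hg1 (IgI 0 I0) (IgI x Ix) Hg0f Hgxf) as [Hrest _].
  rewrite !iter_succ_r.
  apply (proj1 (Hprod (Rabs (iter k g (g 0) - iter k g (g x))) (Rabs (g 0 - g x)) (Rabs x)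
    (Rabs_pos x))); auto.
Qed.

Lemma stably_expansive_of_return P kap eps0 d0 :
  1 < kap -> 0 < eps0 -> 0 < d0 ->
  (forall j, (1 <= j)%nat -> (j < P)%nat -> iter j f 0 <> 0) ->
  (forall g, near g d0 -> return_expanding g eps0 kap P) ->
  exists eps, 0 < eps /\ stably_expansive eps f.
Proof.
  intros Hkap Heps0 Hd0 Hne Hret.
  destruct (near_critical_gap P Hne) as [eps1 [d1 [Heps1 [Hd1 Hgap]]]].
  pose proof (Rmin_l eps0 eps1); pose proof (Rmin_r eps0 eps1).
  set (delta := Rmin (Rmin d0 d1) ((lam - 1) / 2)).
  assert (Hdelta : delta <= d0 /\ delta <= d1 /\ delta <= (lam - 1) / 2).
  { unfold delta. pose proof (Rmin_l (Rmin d0 d1) ((lam - 1) / 2)).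
    pose proof (Rmin_r (Rmin d0 d1) ((lam - 1) / 2)).
    pose proof (Rmin_l d0 d1); pose proof (Rmin_r d0 d1). lra. }
  exists (Rmin eps0 eps1). split; [apply Rmin_glb_lt; lra |].
  exists delta. split; [unfold delta; repeat apply Rmin_glb_lt; lra |].
  intros g Hg Hclose.
  pose proof (B1_close_near g delta Hg Hclose) as Hn.
  apply (expansive_criterion g ((1 + lam) / 2) _ kap P); auto; try lra.
  - apply PEU_maps_I; auto.
  - apply (near_expanding g delta); tauto.
  - intros j Hj1 Hj2.
    destruct (Hgap g (near_mono g _ d1 Hn ltac:(lra)) j Hj1 Hj2); [left | right]; lra.
  - intros e Ie He Hhalf.
    apply (Hret g (near_mono g _ d0 Hn ltac:(lra)) e Ie); [lra | auto].
Qed.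

Lemma stably_expansive_nonperiodic : (forall n, (1 <= n)%nat -> iter n f 0 <> 0) ->
  exists eps, 0 < eps /\ stably_expansive eps f.
Proof.
  intros Hnp.
  destruct (pow_unbounded ((1 + lam) / 2) 1 4 ltac:(lra) Rlt_0_1) as [P HP].
  apply (stably_expansive_of_return P 2 1 ((lam - 1) / 2)); try lra.
  - intros j Hj _. auto.
  - intros g Hg. apply (return_expanding_of_pow g ((1 + lam) / 2)); try lra.
    + apply PEU_maps_I, Hg.
    + apply (near_expanding g ((lam - 1) / 2)); auto. lra.
Qed.

Lemma stably_expansive_periodic p : (2 <= p)%nat ->
  (forall k, (1 <= k)%nat -> (k < p)%nat -> iter k f 0 <> 0) ->
  2 < orbit_deriv (p - 1) * turning_slope ->
  exists eps, 0 < eps /\ stably_expansive eps f.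
Proof.
  intros Hp Hpk Hslope.
  set (A := orbit_deriv (p - 1) * turning_slope) in *.
  assert (Hne : forall j, (j < p - 1)%nat -> iter j f (f 0) <> 0).
  { intros j Hj. rewrite <- iter_succ_r. apply Hpk; lia. }
  destruct (near_return_estimate (p - 1) ((A - 2) / 2) Hne ltac:(lra))
    as [r [d [Hr [Hd Hest]]]].
  apply (stably_expansive_of_return p ((A + 2) / 4) (r / 2) d); try lra; auto.
  intros g Hg e Ie He _.
  replace p with (S (p - 1)) by lia.
  specialize (Hest g e Hg Ie ltac:(lra)). fold A in Hest. lra.
Qed.

Lemma good_stably_expansive : good f -> exists eps, 0 < eps /\ stably_expansive eps f.
Proof.
  intros [Hnp | [p [Hp [_ [Hpk [DL' [DR' [l [HDL' [HDR' [Hl Hgood]]]]]]]]]]].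
  - apply stably_expansive_nonperiodic. intros n Hn Hz. apply Hnp. exists n. auto.
  - apply (stably_expansive_periodic p); auto.
    assert (HlA : Rabs l <= orbit_deriv (p - 1)).
    { apply deriv_iter_le_orbit_deriv; auto.
      intros j Hj. rewrite <- iter_succ_r. apply Hpk; lia. }
    rewrite (C1_on_unique (-1) 0 f DL' DL ltac:(lra) HDL' f_DL 0 ltac:(unfold cI; lra)),
      (C1_on_unique 0 1 f DR' DR ltac:(lra) HDR' f_DR 0 ltac:(unfold cI; lra)) in Hgood.
    fold turning_slope in Hgood.
    assert (0 <= turning_slope) by (unfold turning_slope; apply Rmin_glb; apply Rabs_pos).
    nra.
Qed.

End Stability.

Theorem proposition2p1 (f : R -> R) (hf : PEU f) :
  (exists eps, 0 < eps /\ expansive eps f) /\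
  (good f -> exists eps, 0 < eps /\ stably_expansive eps f).
Proof.
  split; [apply PEU_expansive; auto |].
  destruct (PEU_expanding f hf) as [lam [Hlam [DL [DR [HDL [HDR [HL HR]]]]]]].
  exact (good_stably_expansive f DL DR lam hf HDL HDR HL HR Hlam).
Qed.
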